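(* Let $\mathbb{C}$ be a modified category of interest and let $\mathcal{A}$, $\mathcal{B}$ be simplicial objects in $\mathbb{C}$ with Moore complex of length one which are homotopy equivalent, i.e. there are simplicial maps $f\colon\mathcal{A}\to\mathcal{B}$ and $g\colon\mathcal{B}\to\mathcal{A}$ with simplicial homotopies $g\circ f\simeq\mathrm{id}_{\mathcal{A}}$ and $f\circ g\simeq\mathrm{id}_{\mathcal{B}}$. Then the crossed modules $X_1(\mathcal{A})$ and $X_1(\mathcal{B})$ are homotopy equivalent, i.e. $X_1(g)\circ X_1(f)$ is homotopic to the identity of $X_1(\mathcal{A})$ and $X_1(f)\circ X_1(g)$ is homotopic to the identity of $X_1(\mathcal{B})$.
   Context: A modified category of interest (MCI) is a category $\mathbb{C}$ of groups (written additively) with additional unary and binary operations: $\Omega=\Omega_0\cup\Omega_1\cup\Omega_2$, $\Omega_0=\{0\}$, $\Omega_2'=\Omega_2\setminus\{+\}$ closed under $x*^\circ y=y*x$, with $x*(y+z)=x*y+x*z$, unary operations other than $-$ compatible with $+$ and $*$, $x_1+(x_2*x_3)=(x_2*x_3)+x_1$ for $*\in\Omega_2'$, and each $(x_1*x_2)\bar*x_3$ expressible as a word in the products $x_i(x_jx_k),(x_jx_k)x_i$, $i\in\{1,2\}$. A derived action of $R$ on $E$ consists of maps $r\cdot e=\sigma(r)+e-\sigma(r)$, $r*e=\sigma(r)*e$ ($*\in\Omega_2'$) induced by a split extension of $R$ by $E$ with section $\sigma$. A crossed module is a morphism $\partial\colon E\to R$ with a derived action satisfying $\partial(r\cdot e)=r+\partial(e)-r$,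 $\partial(r*e)=r*\partial(e)$, $\partial(e)\cdot e'=e+e'-e$, $\partial(e)*e'=e*e'$. A crossed module morphism $(f_1,f_0)$ satisfies $\partial'f_1=f_0\partial$, $f_1(r\cdot e)=f_0(r)\cdot f_1(e)$, $f_1(r*e)=f_0(r)*f_1(e)$. For a morphism $f_0\colon R\to R'$, an $f_0$-derivation is a map $s\colon R\to E'$ with $s(g+h)=\big(f_0(-h)\cdot s(g)\big)+s(h)$ and $s(g*h)=f_0(g)*s(h)+f_0(h)*^\circ s(g)+s(g)*s(h)$; two crossed module morphisms $(f_1,f_0),(g_1,g_0)$ are homotopic if there is an $f_0$-derivation $s$ with $g_0=f_0+\partial'\circ s$ and $g_1=f_1+s\circ\partial$. A simplicial object $\mathcal{A}$ in $\mathbb{C}$ consists of objects $A_n$ ($n\ge0$), faces $d_i\colon A_n\to A_{n-1}$ ($0\le i\le n$), degeneracies $s_j\colon A_n\to A_{n+1}$ ($0\le j\le n$) satisfying the usual simplicial identities; simplicial maps commute with faces and degeneracies. The Moore complex has $NA_0=A_0$, $NA_n=\bigcap_{i=0}^{n-1}\operatorname{Ker}d_i$ ($n\ge1$); it has length one if $NA_n=0$ for $n\ge2$. A simplicial homotopy from $f$ to $g$ is a family $h_i^n\colon A_n\to B_{n+1}$, $0\le i\le n$, with $d_0h_0=f$, $d_{n+1}h_n=g$, $d_ih_j=h_{j-1}d_i$ ($i<j$), $d_{j+1}h_{j+1}=d_{j+1}h_j$, $d_ih_j=h_jd_{i-1}$ ($i>j+1$), $s_ih_j=h_{j+1}s_i$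 ($i\le j$), $s_ih_j=h_js_{i-1}$ ($i>j$). The functor $X_1$ sends a simplicial object $\mathcal{A}$ with Moore complex of length one to the crossed module $d_1|\colon\operatorname{Ker}(d_0\colon A_1\to A_0)\to A_0$ with action $r\cdot e=s_0(r)+e-s_0(r)$, $r*e=s_0(r)*e$, and a simplicial map $f$ to $(f_1|_{\operatorname{Ker}d_0},f_0)$. *)

From Stdlib Require Import Arith Lia.
Set Implicit Arguments.
Unset Strict Implicit.

(* Signature Omega: Omega_0 = {0}, Omega_1 = {-} U Un, Omega_2 = {+} U Bin
   (Bin = Omega_2'), with the involution * |-> *^o on Omega_2'.         *)
Record signature := Signature {
  Un : Type;
  Bin : Type;
  circ : Bin -> Bin
}.

Record OGroup (S : signature) := OGroupPack {
  car :> Type;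
  oadd : car -> car -> car;
  oopp : car -> car;
  ozero : car;
  uop : Un S -> car -> car;
  bop : Bin S -> car -> car -> car
}.
Arguments oadd {S o} _ _.
Arguments oopp {S o} _.
Arguments ozero {S o}.
Arguments uop {S o} _ _.
Arguments bop {S o} _ _ _.

Definition mci_axioms (S : signature) (A : OGroup S) : Prop :=
  (forall x y z : A, oadd x (oadd y z) = oadd (oadd x y) z) /\
  (forall x : A, oadd ozero x = x) /\
  (forall x : A, oadd x ozero = x) /\
  (forall x : A, oadd (oopp x) x = ozero) /\
  (forall x : A, oadd x (oopp x) = ozero) /\
  (forall (b : Bin S) (x y : A), bop (circ b) x y = bop b y x) /\
  (forall (b : Bin S) (x y z : A), bop b x (oadd y z) = oadd (bop b x y) (bop b x z)) /\
  (forall (u : Un S) (x y : A), uop u (oadd x y) = oadd (uop u x) (uop u y)) /\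
  (forall (u : Un S) (b : Bin S) (x y : A), uop u (bop b x y) = bop b (uop u x) y) /\
  (forall (b : Bin S) (x1 x2 x3 : A), oadd x1 (bop b x2 x3) = oadd (bop b x2 x3) x1).

(* Words in the products x_i (x_j x_k), (x_j x_k) x_i, i in {1,2},
   {j,k} = {1,2,3} \ {i} (both orders), built with the group operations. *)
Inductive gword (S : signature) :=
  | wzero : gword S
  | wadd : gword S -> gword S -> gword S
  | wopp : gword S -> gword S
  | watom : bool (* i = 2 ? (else i = 1) *) ->
            bool (* swap j,k ? *) ->
            bool (* x_i on the left ? *) ->
            Bin S (* outer operation *) -> Bin S (* inner operation *) -> gword S.
Arguments wzero {S}.

Fixpoint weval (S : signature) (A : OGroup S) (w : gword S) (x1 x2 x3 : A) : A :=
  match w with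
  | wzero => ozero
  | wadd v w => oadd (weval v x1 x2 x3) (weval w x1 x2 x3)
  | wopp v => oopp (weval v x1 x2 x3)
  | watom i2 sw lft b c =>
      let xi := if i2 then x2 else x1 in
      let p := if i2 then x1 else x2 in
      let q := x3 in
      let inner := if sw then bop c q p else bop c p q in
      if lft then bop b xi inner else bop b inner xi
  end.

(* A modified category of interest: a (full) category of Omega-groups,
   given by its class of objects, all satisfying the axioms, together with
   the uniform "word" axiom for (x1 * x2) *bar x3. *)
Record MCI := MkMCI {
  msig :> signature;
  inC : OGroup msig -> Prop;
  inC_axioms : forall A, inC A -> mci_axioms A;
  inC_words : forall b c : Bin msig, exists w : gword msig,
      forall A, inC A -> forall x1 x2 x3 : A,
        bop c (bop b x1 x2) x3 = weval w x1 x2 x3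
}.

Definition ohom (S : signature) (A B : OGroup S) (f : A -> B) : Prop :=
  (forall x y : A, f (oadd x y) = oadd (f x) (f y)) /\
  (forall (u : Un S) (x : A), f (uop u x) = uop u (f x)) /\
  (forall (b : Bin S) (x y : A), f (bop b x y) = bop b (f x) (f y)).

(* Simplicial objects in C.  face n i : A_{n+1} -> A_n is d_i (0 <= i <= n+1),
   degen n j : A_n -> A_{n+1} is s_j (0 <= j <= n).  Values at out-of-range
   indices are irrelevant. *)
Unset Implicit Arguments.
Record sobj (C : MCI) := MkSobj {
  ob : nat -> OGroup C;
  ob_in : forall n, inC (ob n);
  face : forall n, nat -> ob (S n) -> ob n;
  degen : forall n, nat -> ob n -> ob (S n);
  face_hom : forall n i, i <= S n -> ohom (face n i);
  degen_hom : forall n j, j <= n -> ohom (degen n j);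
  dd : forall n i j (x : ob (S (S n))), i < j -> j <= S (S n) ->
         face n i (face (S n) j x) = face n (j - 1) (face (S n) i x);
  ds_lt : forall n i j (x : ob (S n)), i < j -> j <= S n ->
         face (S n) i (degen (S n) j x) = degen n (j - 1) (face n i x);
  ds_eq : forall n j (x : ob n), j <= n -> face n j (degen n j x) = x;
  ds_eq1 : forall n j (x : ob n), j <= n -> face n (S j) (degen n j x) = x;
  ds_gt : forall n i j (x : ob (S n)), S j < i -> i <= S (S n) ->
         face (S n) i (degen (S n) j x) = degen n j (face n (i - 1) x);
  ss : forall n i j (x : ob n), i <= j -> j <= n ->
         degen (S n) i (degen n j x) = degen (S n) (S j) (degen n i x)
}.
Set Implicit Arguments.
Arguments ob {C} _ _.
Arguments face {C} _ _ _ _.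
Arguments degen {C} _ _ _ _.

(* Moore complex of length one: NA_n = 0 for n >= 2, where
   NA_n = intersection of Ker d_i, 0 <= i <= n-1. *)
Definition moore_length_one (C : MCI) (A : sobj C) : Prop :=
  forall n (x : ob A (S (S n))),
    (forall i, i < S (S n) -> face A (S n) i x = ozero) -> x = ozero.

Definition is_smap (C : MCI) (A B : sobj C) (f : forall n, ob A n -> ob B n) : Prop :=
  (forall n, ohom (f n)) /\
  (forall n i (x : ob A (S n)), i <= S n -> f n (face A n i x) = face B n i (f (S n) x)) /\
  (forall n j (x : ob A n), j <= n -> f (S n) (degen A n j x) = degen B n j (f n x)).

Definition shomotopy (C : MCI) (A B : sobj C) (F G : forall n, ob A n -> ob B n) : Prop :=
  exists h : forall n, nat -> ob A n -> ob B (S n),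
    (forall n j, j <= n -> ohom (h n j)) /\
    (forall n (x : ob A n), face B n 0 (h n 0 x) = F n x) /\
    (forall n (x : ob A n), face B n (S n) (h n n x) = G n x) /\
    (forall n i j (x : ob A (S n)), i < j -> j <= S n ->
        face B (S n) i (h (S n) j x) = h n (j - 1) (face A n i x)) /\
    (forall n j (x : ob A n), S j <= n ->
        face B n (S j) (h n (S j) x) = face B n (S j) (h n j x)) /\
    (forall n i j (x : ob A (S n)), S j < i -> i <= S (S n) ->
        face B (S n) i (h (S n) j x) = h n j (face A n (i - 1) x)) /\
    (forall n i j (x : ob A n), i <= j -> j <= n ->
        degen B (S n) i (h n j x) = h (S n) (S j) (degen A n i x)) /\
    (forall n i j (x : ob A n), j < i -> i <= S n ->
        degen B (S n) i (h n j x) = h (S n) j (degen A n (i - 1) x)).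

(* Crossed-module data: the object E is given as a subobject (predicate
   xE) of an ambient Omega-group xEamb. *)
Record xmod (S : signature) := MkXmod {
  xEamb : OGroup S;
  xE : xEamb -> Prop;
  xR : OGroup S;
  xd : xEamb -> xR;
  xact : xR -> xEamb -> xEamb;
  xbact : Bin S -> xR -> xEamb -> xEamb
}.
Arguments xEamb {S} _.
Arguments xE {S} _ _.
Arguments xR {S} _.
Arguments xd {S} _ _.
Arguments xact {S} _ _ _.
Arguments xbact {S} _ _ _ _.

(* Crossed-module morphisms (f_1, f_0); f_1 is only relevant on E. *)
Record xhom (S : signature) (X Y : xmod S) := MkXhom {
  xh1 : xEamb X -> xEamb Y;
  xh0 : xR X -> xR Y
}.
Arguments xh1 {S X Y} _ _.
Arguments xh0 {S X Y} _ _.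

Definition xcomp (S : signature) (X Y Z : xmod S) (G : xhom Y Z) (F : xhom X Y) : xhom X Z :=
  @MkXhom S X Z (fun e => xh1 G (xh1 F e)) (fun r => xh0 G (xh0 F r)).

Definition xid (S : signature) (X : xmod S) : xhom X X :=
  @MkXhom S X X (fun e => e) (fun r => r).

Definition derivation (S : signature) (X Y : xmod S) (f0 : xR X -> xR Y)
    (s : xR X -> xEamb Y) : Prop :=
  (forall r, xE Y (s r)) /\
  (forall g h : xR X, s (oadd g h) = oadd (xact Y (f0 (oopp h)) (s g)) (s h)) /\
  (forall (b : Bin S) (g h : xR X),
      s (bop b g h) =
      oadd (oadd (xbact Y b (f0 g) (s h)) (xbact Y (circ b) (f0 h) (s g)))
           (bop b (s g) (s h))).

Definition xhomotopic (S : signature) (X Y : xmod S) (F G : xhom X Y) : Prop :=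
  exists s : xR X -> xEamb Y,
    derivation (xh0 F) s /\
    (forall r, xh0 G r = oadd (xh0 F r) (xd Y (s r))) /\
    (forall e, xE X e -> xh1 G e = oadd (xh1 F e) (s (xd X e))).

Definition X1 (C : MCI) (A : sobj C) : xmod C :=
  MkXmod (xEamb := ob A 1) (xR := ob A 0)
    (fun e => face A 0 0 e = ozero)
    (face A 0 1)
    (fun r e => oadd (oadd (degen A 0 0 r) e) (oopp (degen A 0 0 r)))
    (fun b r e => bop b (degen A 0 0 r) e).

Definition X1map (C : MCI) (A B : sobj C) (f : forall n, ob A n -> ob B n)
  : xhom (X1 A) (X1 B) :=
  @MkXhom C (X1 A) (X1 B) (f 1) (f 0).

Arguments is_smap {C} A B f.
Arguments shomotopy {C} A B F G.
Arguments X1map {C} A B f.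
Arguments X1 {C} A.
Arguments moore_length_one {C} A.

(** A simplicial homotopy [h] from [F] to [G] yields the [F_0]-derivation
    [s r = - s_0 (F_0 r) + h_0 r] of [X_1].  It is a derivation because it is
    the pointwise difference of the two homomorphisms [s_0 F_0] and [h_0].
    The identity [G_1 e = F_1 e + s (d_1 e)] on [Ker d_0] comes from the
    element [s_0 (F_1 e) - s_1 (F_1 e) + h_1 e - h_0 e] of [B_2]: its faces
    [d_0] and [d_1] vanish, so it is zero since the Moore complex of [B] has
    length one, and its face [d_2] is the identity in question. *)
From Stdlib Require Import Arith Lia.
Set Implicit Arguments.

Section OGroupTheory.
Variables (S : signature) (G : OGroup S).
Hypothesis HG : mci_axioms G.

Lemma oaddA (x y z : G) : oadd x (oadd y z) = oadd (oadd x y) z.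
Proof. apply HG. Qed.

Lemma oadd0l (x : G) : oadd ozero x = x.
Proof. apply HG. Qed.

Lemma oadd0r (x : G) : oadd x ozero = x.
Proof. apply HG. Qed.

Lemma oaddNl (x : G) : oadd (oopp x) x = ozero.
Proof. apply HG. Qed.

Lemma oaddNr (x : G) : oadd x (oopp x) = ozero.
Proof. apply HG. Qed.

Lemma obop_circ b (x y : G) : bop (circ b) x y = bop b y x.
Proof. apply HG. Qed.

Lemma obopDr b (x y z : G) : bop b x (oadd y z) = oadd (bop b x y) (bop b x z).
Proof. apply HG. Qed.

Lemma obopDl b (x y z : G) : bop b (oadd x y) z = oadd (bop b x z) (bop b y z).
Proof. rewrite <- !(obop_circ b z). apply obopDr. Qed.

Lemma oaddKl (x y : G) : oadd (oopp x) (oadd x y) = y.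
Proof. rewrite oaddA, oaddNl, oadd0l. reflexivity. Qed.

Lemma oaddKr (x y : G) : oadd x (oadd (oopp x) y) = y.
Proof. rewrite oaddA, oaddNr, oadd0l. reflexivity. Qed.

Lemma oadd_eq0_opp (x y : G) : oadd x y = ozero -> x = oopp y.
Proof. intro E. rewrite <- (oadd0r x), <- (oaddNr y), oaddA, E, oadd0l. reflexivity. Qed.

Lemma oadd_idem_eq0 (x : G) : oadd x x = x -> x = ozero.
Proof. intro E. rewrite <- (oaddKl x x), E, oaddNl. reflexivity. Qed.

Lemma ooppK (x : G) : oopp (oopp x) = x.
Proof. symmetry. apply oadd_eq0_opp, oaddNr. Qed.

Lemma ooppD (x y : G) : oopp (oadd x y) = oadd (oopp y) (oopp x).
Proof.
  symmetry. apply oadd_eq0_opp.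
  rewrite <- oaddA, (oaddA (oopp x)), oaddNl, oadd0l, oaddNl. reflexivity.
Qed.

Lemma obop0r b (x : G) : bop b x ozero = ozero.
Proof. apply oadd_idem_eq0. rewrite <- obopDr, oadd0l. reflexivity. Qed.

Lemma obop0l b (x : G) : bop b ozero x = ozero.
Proof. rewrite <- obop_circ. apply obop0r. Qed.

Lemma obopNr b (x y : G) : bop b x (oopp y) = oopp (bop b x y).
Proof. apply oadd_eq0_opp. rewrite <- obopDr, oaddNl. apply obop0r. Qed.

Lemma oopp0 : oopp (ozero : G) = ozero.
Proof. symmetry. apply oadd_eq0_opp, oadd0l. Qed.

End OGroupTheory.

Section OHomTheory.
Variables (S : signature) (A B : OGroup S) (f : A -> B).
Hypotheses (HA : mci_axioms A) (HB : mci_axioms B) (Hf : ohom f).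

Lemma ohomD x y : f (oadd x y) = oadd (f x) (f y).
Proof. apply Hf. Qed.

Lemma ohom_bop b x y : f (bop b x y) = bop b (f x) (f y).
Proof. apply Hf. Qed.

Lemma ohom0 : f ozero = ozero.
Proof. apply oadd_idem_eq0; auto. rewrite <- ohomD, oadd0l; auto. Qed.

Lemma ohomN x : f (oopp x) = oopp (f x).
Proof. apply oadd_eq0_opp; auto. rewrite <- ohomD, oaddNl; auto. apply ohom0. Qed.

End OHomTheory.

Lemma ohom_comp S (A B D : OGroup S) (f : A -> B) (g : B -> D) :
  ohom f -> ohom g -> ohom (fun x => g (f x)).
Proof.
  intros (f1 & f2 & f3) (g1 & g2 & g3).
  repeat split; intros; rewrite ?f1, ?f2, ?f3, ?g1, ?g2, ?g3; reflexivity.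
Qed.

Section HomDifference.
Variables (S : signature) (R E : OGroup S) (p q : R -> E).
Hypotheses (HR : mci_axioms R) (HE : mci_axioms E) (Hp : ohom p) (Hq : ohom q).

Let s r := oadd (oopp (p r)) (q r).

Lemma hom_difference_add a b :
  s (oadd a b) = oadd (oadd (oadd (p (oopp b)) (s a)) (oopp (p (oopp b)))) (s b).
Proof.
  unfold s. rewrite !(ohomD Hp), (ohomD Hq), !(ohomN HR HE Hp), (ooppK HE), (ooppD HE).
  rewrite <- !(oaddA HE). do 3 f_equal. symmetry. apply (oaddKr HE).
Qed.

Lemma hom_difference_bop b x y :
  s (bop b x y) =
  oadd (oadd (bop b (p x) (s y)) (bop (circ b) (p y) (s x))) (bop b (s x) (s y)).
Proof.
  unfold s. rewrite (ohom_bop Hp), (ohom_bop Hq), (obop_circ HE).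
  rewrite <- (oaddA HE), <- (obopDr HE), (oaddKr HE).
  rewrite (obopDr HE), (obopNr HE), (obopDl HE), <- (oaddA HE),
    (oaddA HE (bop b (p x) (q y))), <- (obopDl HE), (oaddNr HE), (obop0l HE), (oadd0l HE).
  reflexivity.
Qed.

End HomDifference.

Lemma ob_axioms (C : MCI) (A : sobj C) n : mci_axioms (ob A n).
Proof. apply inC_axioms, ob_in. Qed.

Lemma is_smap_comp (C : MCI) (A B D : sobj C)
    (f : forall n, ob A n -> ob B n) (g : forall n, ob B n -> ob D n) :
  is_smap A B f -> is_smap B D g -> is_smap A D (fun n x => g n (f n x)).
Proof.
  intros (fh & ff & fd) (gh & gf & gd). split; [|split].
  - intro n. apply ohom_comp; auto.
  - intros n i x Hi. rewrite ff, gf; auto.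
  - intros n j x Hj. rewrite fd, gd; auto.
Qed.

Section X1Homotopy.
Variables (C : MCI) (A B : sobj C) (F G : forall n, ob A n -> ob B n)
  (h : forall n, nat -> ob A n -> ob B (S n)).
Hypotheses (HF : is_smap A B F) (HmB : moore_length_one B)
  (h_hom : forall n j, j <= n -> ohom (h n j))
  (h_first : forall n x, face B n 0 (h n 0 x) = F n x)
  (h_last : forall n x, face B n (S n) (h n n x) = G n x)
  (face_h_lt : forall n i j x, i < j -> j <= S n ->
      face B (S n) i (h (S n) j x) = h n (j - 1) (face A n i x))
  (face_h_eq : forall n j x, S j <= n ->
      face B n (S j) (h n (S j) x) = face B n (S j) (h n j x))
  (face_h_gt : forall n i j x, S j < i -> i <= S (S n) ->
      face B (S n) i (h (S n) j x) = h n j (face A n (i - 1) x)).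

Definition homotopy_derivation (r : ob A 0) : ob B 1 :=
  oadd (oopp (degen B 0 0 (F 0 r))) (h 0 0 r).

Let HA n := ob_axioms A n.
Let HB n := ob_axioms B n.
Let F_hom : forall n, ohom (F n) := proj1 HF.
Let F_face : forall n i x, i <= S n -> F n (face A n i x) = face B n i (F (S n) x) :=
  proj1 (proj2 HF).
Let s00_hom : ohom (degen B 0 0) := degen_hom _ B 0 0 (le_n 0).
Let h00_hom : ohom (h 0 0) := h_hom (le_n 0).

Lemma homotopy_derivation_is_derivation :
  derivation (X := X1 A) (Y := X1 B) (F 0) homotopy_derivation.
Proof.
  assert (Hs : ohom (fun r => degen B 0 0 (F 0 r))) by (apply ohom_comp; auto).
  split; [|split].
  - intro r. simpl. unfold homotopy_derivation.
    assert (Hd := face_hom _ B 0 0 (Nat.le_0_l 1)).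
    rewrite (ohomD Hd), (ohomN (HB 1) (HB 0) Hd), ds_eq, h_first by auto.
    apply oaddNl, HB.
  - intros a b. exact (hom_difference_add (HA 0) (HB 1) Hs h00_hom a b).
  - intros b x y. exact (hom_difference_bop (HB 1) Hs h00_hom b x y).
Qed.

Lemma homotopy_derivation_boundary r :
  G 0 r = oadd (F 0 r) (face B 0 1 (homotopy_derivation r)).
Proof.
  unfold homotopy_derivation.
  assert (Hd := face_hom _ B 0 1 (le_n 1)).
  rewrite (ohomD Hd), (ohomN (HB 1) (HB 0) Hd), ds_eq1, h_last by auto.
  symmetry. apply oaddKr, HB.
Qed.

Section Cycle.
Variable e : ob A 1.
Hypothesis He : face A 0 0 e = ozero.

Let Fe := F 1 e.

Let witness : ob B 2 :=
  oadd (oadd (oadd (degen B 1 0 Fe) (oopp (degen B 1 1 Fe))) (h 1 1 e)) (oopp (h 1 0 e)).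

Lemma face0_F_cycle : face B 0 0 Fe = ozero.
Proof. unfold Fe. rewrite <- F_face, He by auto. apply (ohom0 (HA 0) (HB 0) (F_hom 0)). Qed.

Lemma witness_eq0 : witness = ozero.
Proof.
  apply HmB. intros i Hi. destruct i as [|[|i]]; [| |exfalso; lia].
  - assert (Hd := face_hom _ B 1 0 (Nat.le_0_l 2)).
    unfold witness. rewrite !(ohomD Hd), !(ohomN (HB 2) (HB 1) Hd).
    rewrite (ds_eq _ B 1 0), (ds_lt _ B 0 0 1), face_h_lt by auto. simpl (1 - 1).
    rewrite h_first, face0_F_cycle, He,
      (ohom0 (HB 0) (HB 1) s00_hom), (ohom0 (HA 0) (HB 1) h00_hom), (oopp0 (HB 1)),
      !(oadd0r (HB 1)).
    apply oaddNr, HB.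
  - assert (Hd := face_hom _ B 1 1 (le_S _ _ (le_n 1))).
    unfold witness. rewrite !(ohomD Hd), !(ohomN (HB 2) (HB 1) Hd).
    rewrite (ds_eq1 _ B 1 0), (ds_eq _ B 1 1), face_h_eq by auto.
    rewrite (oaddNr (HB 1)), (oadd0l (HB 1)). apply oaddNr, HB.
Qed.

Lemma homotopy_cycle : G 1 e = oadd (F 1 e) (homotopy_derivation (face A 0 1 e)).
Proof.
  assert (Hd := face_hom _ B 1 2 (le_n 2)).
  assert (Z := f_equal (face B 1 2) witness_eq0). unfold witness in Z.
  rewrite (ohom0 (HB 2) (HB 1) Hd), !(ohomD Hd), !(ohomN (HB 2) (HB 1) Hd),
    (ds_gt _ B 0 2 0), (ds_eq1 _ B 1 1), h_last, face_h_gt in Z by auto.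
  simpl (2 - 1) in Z. fold Fe in Z.
  apply (oadd_eq0_opp (HB 1)) in Z. rewrite (ooppK (HB 1)) in Z.
  unfold homotopy_derivation. rewrite F_face, <- Z by auto.
  rewrite <- (oaddA (HB 1) (degen B 0 0 _)), (oaddKl (HB 1)), (oaddKr (HB 1)).
  reflexivity.
Qed.

End Cycle.

Lemma X1map_homotopic : xhomotopic (X1map A B F) (X1map A B G).
Proof.
  exists homotopy_derivation. split; [|split].
  - exact homotopy_derivation_is_derivation.
  - exact homotopy_derivation_boundary.
  - exact homotopy_cycle.
Qed.

End X1Homotopy.

Lemma X1map_shomotopic (C : MCI) (A B : sobj C) (F G : forall n, ob A n -> ob B n) :
  moore_length_one B -> is_smap A B F -> shomotopy A B F G ->
  xhomotopic (X1map A B F) (X1map A B G).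
Proof.
  intros HmB HF (h & h_hom & h_first & h_last & face_h_lt & face_h_eq & face_h_gt & _).
  exact (X1map_homotopic G h HF HmB h_hom h_first h_last face_h_lt face_h_eq face_h_gt).
Qed.

Theorem mainTheorem7 (C : MCI) (A B : sobj C)
  (f : forall n, ob A n -> ob B n) (g : forall n, ob B n -> ob A n) :
  moore_length_one A -> moore_length_one B ->
  is_smap A B f -> is_smap B A g ->
  shomotopy A A (fun n x => g n (f n x)) (fun n x => x) ->
  shomotopy B B (fun n x => f n (g n x)) (fun n x => x) ->
  xhomotopic (xcomp (X1map B A g) (X1map A B f)) (xid (X1 A)) /\
  xhomotopic (xcomp (X1map A B f) (X1map B A g)) (xid (X1 B)).
Proof.
  intros HmA HmB Hf Hg Hgf Hfg. split.
  - exact (X1map_shomotopic HmA (is_smap_comp Hf Hg) Hgf).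
  - exact (X1map_shomotopic HmB (is_smap_comp Hg Hf) Hfg).
Qed.
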